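(* Let $T$ be a tree of order $n$ with $\operatorname{diam}(T)\geq 4$, and let $T_1$ be a tree obtained from $T$ by a proper generalized tree shift. Then $\mu_1(\overline{T_1})> \mu_1(\overline{T})$, where $\mu_1(G)$ denotes the distance signless Laplacian spectral radius of $G$ and $\overline{G}$ denotes the complement of $G$.
   Context: For a connected graph $G$ with vertices $v_1,\dots,v_n$, the distance matrix $D(G)$ has $(v_i,v_j)$-entry equal to the distance $d_G(v_i,v_j)$. The transmission $\operatorname{Tr}(v_i)=\sum_j d_G(v_i,v_j)$, and $\operatorname{Tr}(G)=\operatorname{diag}(\operatorname{Tr}(v_1),\dots,\operatorname{Tr}(v_n))$. The distance signless Laplacian matrix is $D^Q(G)=\operatorname{Tr}(G)+D(G)$, and $\mu_1(G)$ is its largest eigenvalue. The complement $\overline{G}$ has the same vertex set as $G$, with two distinct vertices adjacent iff they are non-adjacent in $G$. Generalized tree shift (GTS): let $T$ be a tree and $u,v\in V(T)$ such that all interior vertices of the path $uPv$ from $u$ to $v$ in $T$ (if any) have degree $2$. Let $w$ be the neighbor of $v$ on the path $uPv$ (possibly $w=u$). The tree $T_1$ is obtained from $T$ by deleting all edges between $v$ and $N_T(v)\setminus\{w\}$ and adding all edges between $u$ and $N_T(v)\setminus\{w\}$. The GTS is called proper if neither $u$ nor $v$ is a pendant vertex of $T$; in that case $T_1$ has one more pendant vertex than $T$. *)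

From HB Require Import structures.
From mathcomp Require Import all_boot all_order all_algebra.
From mathcomp Require Import all_reals.
Set Implicit Arguments. Unset Strict Implicit. Unset Printing Implicit Defensive.
Import Order.TTheory GRing.Theory Num.Theory.

Definition simple_graph n (e : rel 'I_n) := symmetric e /\ irreflexive e.

Definition connected_graph n (e : rel 'I_n) := forall x y, connect e x y.

Definition acyclic n (e : rel 'I_n) :=
  forall s : seq 'I_n, uniq s -> 3 <= size s -> ~~ cycle e s.

Definition is_tree n (e : rel 'I_n) :=
  [/\ simple_graph e, connected_graph e & acyclic e].

Definition deg n (e : rel 'I_n) (x : 'I_n) : nat := #|[set y | e x y]|.

Fixpoint walk_le n (e : rel 'I_n) (k : nat) (x y : 'I_n) : bool :=
  if k is k'.+1 then walk_le e k' x y || [exists z, e x z && walk_le e k' z y]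
  else x == y.

(* distance: least k with a walk of length <= k (for connected graphs this is
   the usual graph distance; it is < n) *)
Definition dist n (e : rel 'I_n) (x y : 'I_n) : nat :=
  find (fun k => walk_le e k x y) (iota 0 n).

Definition diam_ge n (e : rel 'I_n) (k : nat) := exists x y, k <= dist e x y.

Definition complement n (e : rel 'I_n) : rel 'I_n :=
  [rel x y | (x != y) && ~~ e x y].

Definition transmission n (e : rel 'I_n) (x : 'I_n) : nat :=
  \sum_(y < n) dist e x y.

Local Open Scope ring_scope.
Definition distQ (R : realType) n (e : rel 'I_n) : 'M[R]_n :=
  \matrix_(i, j) ((if i == j then (transmission e i)%:R else 0) + (dist e i j)%:R).

Definition largest_eigenvalue (R : realType) n (M : 'M[R]_n) (mu : R) :=
  eigenvalue M mu /\ forall nu, eigenvalue M nu -> nu <= mu.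

Local Close Scope ring_scope.
(* generalized tree shift: move N(v) \ {w} from v to u *)
Definition gts n (e : rel 'I_n) (u v w : 'I_n) : rel 'I_n :=
  let S := fun x => e v x && (x != w) in
  [rel x y | (e x y && ~~ ((x == v) && S y || (y == v) && S x))
             || ((x == u) && S y || (y == u) && S x)].

(* The largest eigenvalue of a symmetric matrix is the maximum of its Rayleigh
   quotient, attained for a nonnegative matrix at a nonnegative unit vector.
   In the complement of a tree of diameter at least 4, two vertices are at
   distance 1 or 2 according as they are non-adjacent or adjacent in the tree,
   so the D^Q-form of the complement at x is the sum over i <> j of
   (1 + [ij in T]) (x_i^2 + x_i x_j); for T1 these weights only bound the
   distances in its complement from below.  Let x be such a Perron vector for
   the complement of T.  The shift trades the edges vk, k in N(v) off the path,
   for the edges uk, which changes the form at x by the sum over such k of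
   (x_u - x_v)(x_u + x_v + 2 x_k).  If x_u >= x_v this is nonnegative, and
   equality of the two spectral radii would make x an eigenvector for T1 too,
   which fails at the entry u because x > 0.  If x_u < x_v, the shift in the
   opposite direction strictly increases the form, and reversing the path
   u ... v maps that tree isomorphically onto T1. *)

From HB Require Import structures.
From mathcomp Require Import all_boot all_order all_algebra all_reals.
From mathcomp Require Import all_classical all_analysis.
From mathcomp Require Import zify ring lra.
Set Implicit Arguments. Unset Strict Implicit. Unset Printing Implicit Defensive.
Import Order.TTheory GRing.Theory Num.Theory.
Import numFieldTopology.Exports numFieldNormedType.Exports.

Section Walks.
Variables (n : nat) (e : rel 'I_n).

Lemma walk_leS k x y : walk_le e k x y -> walk_le e k.+1 x y.
Proof. by move=> h /=; rewrite h. Qed.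

Lemma walk_le_cat k m x y z :
  walk_le e k x y -> walk_le e m y z -> walk_le e (k + m) x z.
Proof.
elim: k x => [|k IH] x /=; first by move=> /eqP ->.
case/orP=> [xy|/existsP[t /andP[xt ty]]] yz.
  by apply/walk_leS/(IH _ xy).
by apply/orP; right; apply/existsP; exists t; rewrite xt (IH _ ty).
Qed.

Lemma walk_le1 x y : walk_le e 1 x y = (x == y) || e x y.
Proof.
congr (_ || _); apply/existsP/idP => [[t /andP[xt /eqP <-]] //|xy].
by exists y; rewrite xy eqxx.
Qed.

Lemma walk_le_sym k x y : symmetric e -> walk_le e k x y = walk_le e k y x.
Proof.
move=> se; suff sym k' a b : walk_le e k' a b -> walk_le e k' b a.
  by apply/idP/idP; apply: sym.
elim: k' a b => [|k' IH] a b; first by rewrite /= eq_sym.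
case/orP=> [ab|/existsP[t /andP[ta tb]]]; first by rewrite /= IH.
by rewrite -addn1 (walk_le_cat (IH _ _ tb)) // walk_le1 se ta orbT.
Qed.

Lemma dist_le_walk k x y : walk_le e k x y -> dist e x y <= k.
Proof.
move=> xy; rewrite /dist; case: (ltnP k n) => [kn|nk]; last first.
  by rewrite (leq_trans (find_size _ _)) ?size_iota.
rewrite leqNgt; apply/negP => /(before_find 0).
by rewrite nth_iota // add0n xy.
Qed.

Lemma dist_ge_walk k x y : k <= n ->
  (forall j, j < k -> ~~ walk_le e j x y) -> k <= dist e x y.
Proof.
move=> kn nowalk; rewrite /dist leqNgt; apply/negP => lt.
have has_walk : has (fun j => walk_le e j x y) (iota 0 n).
  by rewrite has_find size_iota (leq_trans lt kn).
move: (nth_find 0 has_walk); rewrite nth_iota ?add0n ?(leq_trans lt kn) //.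
by apply/negP/nowalk.
Qed.

Lemma dist_sym x y : symmetric e -> dist e x y = dist e y x.
Proof. by move=> se; apply: eq_find => k; apply: walk_le_sym. Qed.

Lemma dist_xx x : dist e x x = 0.
Proof. by apply/eqP; rewrite -leqn0 (@dist_le_walk 0) /=. Qed.

End Walks.

(* For a graph [g] of diameter at least 4 the distance matrix of its
   complement is [J - I + A(g)]. *)
Definition cdist n (g : rel 'I_n) (i j : 'I_n) : nat := (i != j) + g i j.

Section ComplementDistance.
Variables (n : nat) (g : rel 'I_n).

Lemma cdist_le_dist_complement i j :
  irreflexive g -> cdist g i j <= dist (complement g) i j.
Proof.
move=> ig; rewrite /cdist; case: eqVneq => [<-|ij]; first by rewrite ig.
apply: dist_ge_walk => [|[|[|k]] //].
- (* [dist] only looks at walks shorter than [n], and [i != j] forces [n >= 2]. *)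
  have := ltn_ord i; have := ltn_ord j; have : val i != val j by [].
  by case: (g i j) => /=; lia.
- by case gij: (g i j) => // _; rewrite walk_le1 /complement /= (negbTE ij) gij.
- by case: (g i j).
Qed.

Lemma complement_sym : symmetric g -> symmetric (complement g).
Proof. by move=> sg a b; rewrite /complement /= eq_sym sg. Qed.

Lemma diam4_non_nbr i j : symmetric g -> diam_ge g 4 -> g i j ->
  exists z, [&& z != i, z != j, ~~ g i z & ~~ g j z].
Proof.
(* Otherwise every vertex is within distance 1 of the edge [ij], so any two
   vertices are joined by a walk of length 3. *)
move=> sg [x [y xy4]] gij; apply/existsP; apply: contraTT xy4.
rewrite negb_exists -ltnNge => /forallP near.
have near1 z : exists2 a, walk_le g 1 z a & (a == i) || (a == j).
  move: (near z); rewrite !negb_and !negbK.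
  case/or4P=> [/eqP->|/eqP->|giz|gjz]; [exists i|exists j|exists i|exists j];
    rewrite ?walk_le1 ?eqxx ?orbT //; by rewrite sg ?giz ?gjz orbT.
have ij1 a b : (a == i) || (a == j) -> (b == i) || (b == j) -> walk_le g 1 a b.
  rewrite walk_le1; case/orP=> /eqP-> /orP[]/eqP->; rewrite ?eqxx //.
  - by rewrite gij orbT.
  - by rewrite sg gij orbT.
have [a xa ai] := near1 x; have [b yb bi] := near1 y.
rewrite walk_le_sym // in yb.
have walk3 := walk_le_cat (walk_le_cat xa (ij1 _ _ ai bi)) yb.
exact: leq_ltn_trans (dist_le_walk walk3) _.
Qed.

Lemma dist_complement_diam4 i j :
  symmetric g -> irreflexive g -> diam_ge g 4 ->
  dist (complement g) i j = cdist g i j.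
Proof.
move=> sg ig dm; apply/eqP; rewrite eqn_leq cdist_le_dist_complement // andbT.
rewrite /cdist; case: eqVneq => [->|ij]; first by rewrite dist_xx.
case gij: (g i j); last first.
  by apply: dist_le_walk; rewrite walk_le1 /complement /= (negbTE ij) gij.
have [z /and4P[zi zj giz gjz]] := diam4_non_nbr sg dm gij.
apply: (@dist_le_walk _ _ (1 + 1)); apply: (@walk_le_cat _ _ _ _ _ z).
  by rewrite walk_le1 /complement /= eq_sym zi giz orbT.
by rewrite walk_le1 /complement /= zj sg gjz orbT.
Qed.

End ComplementDistance.

Lemma acyclic_chordless n (e : rel 'I_n) (s : seq 'I_n) x0 i j :
  acyclic e -> uniq s -> sorted e s -> i.+1 < j < size s ->
  ~~ e (nth x0 s j) (nth x0 s i).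
Proof.
move=> ac us ss /andP[ij js].
set t := take (j - i) (drop i.+1 s).
have tE : take (j - i).+1 (drop i s) = nth x0 s i :: t.
  by rewrite (drop_nth x0) ?(ltn_trans _ js) // ltnW.
have := ac (take (j - i).+1 (drop i s)).
rewrite take_uniq ?drop_uniq // size_takel ?size_drop; last by lia.
have size_ge3 : 2 < (j - i).+1 by lia.
move=> /(_ isT size_ge3); rewrite tE /cycle rcons_path.
have /= -> : sorted e (nth x0 s i :: t) by rewrite -tE take_sorted ?drop_sorted.
rewrite (last_nth x0) /= -tE nth_take ?size_takel ?ltnSn //.
  by rewrite nth_drop subnKC //; lia.
all: by rewrite size_drop; lia.
Qed.

Lemma gts_sym n (e : rel 'I_n) u v w : symmetric e -> symmetric (gts e u v w).
Proof.
move=> se a b; rewrite /gts /= se.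
by rewrite [(b == v) && _ || _]orbC [(b == u) && _ || _]orbC.
Qed.

Lemma gts_irr n (e : rel 'I_n) u v w :
  irreflexive e -> ~~ (e v u && (u != w)) -> irreflexive (gts e u v w).
Proof.
move=> ie vu a; rewrite /gts /= ie /= orbb.
by case: eqVneq => [->|] //=; rewrite (negbTE vu).
Qed.

Lemma natr_edit (R : comPzRingType) (E X1 X2 Y1 Y2 : bool) :
  ~~ (X1 && X2) -> ~~ (Y1 && Y2) -> (X1 || X2 -> E) -> (Y1 || Y2 -> ~~ E) ->
  ((E && ~~ (X1 || X2) || (Y1 || Y2))%:R : R)%R =
    (E%:R - X1%:R - X2%:R + Y1%:R + Y2%:R)%R.
Proof.
by case: E X1 X2 Y1 Y2 => [] [] [] [] [] //= _ _ X Y;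
  (try by move: (X isT)); (try by move: (Y isT)); ring.
Qed.

Section ShiftAlongPath.
Variables (n : nat) (e : rel 'I_n) (u v : 'I_n) (q : seq 'I_n).
Hypotheses (se : symmetric e) (ie : irreflexive e) (ac : acyclic e).
Hypotheses (pth : path e u (rcons q v)) (un : uniq (u :: rcons q v)).
Hypothesis dg : all (fun x => deg e x == 2) q.

Local Notation P := (u :: rcons q v).
Local Notation node t := (nth u P t).
Local Notation w := (last u q).
Local Notation T1 := (gts e u v w).
Local Notation moved x := ((x \notin P) && e v x).

Lemma size_path_nodes : size P = (size q).+2.
Proof. by rewrite /= size_rcons. Qed.

Lemma node_v : node (size q).+1 = v.
Proof. by rewrite /= nth_rcons ltnn eqxx. Qed.

Lemma node_last : node (size q) = w.
Proof. by rewrite -rcons_cons nth_rcons /= ltnSn (last_nth u). Qed.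

Lemma node_index a : a \in P -> node (index a P) = a.
Proof. exact: nth_index. Qed.

Lemma u_neq_v : u != v.
Proof. by move: un; rewrite /= mem_rcons inE negb_or => /andP[/andP[]]. Qed.

Lemma adj_nodes i j : i < size P -> j < size P ->
  e (node i) (node j) = (j == i.+1) || (i == j.+1).
Proof.
have edge t : t.+1 < size P -> e (node t) (node t.+1).
  by move=> tP; move/(pathP u): pth; apply.
have chordless t s : t.+1 < s -> s < size P -> ~~ e (node t) (node s).
  by move=> ts sP; rewrite se acyclic_chordless // ts.
move=> iP jP; case: (ltngtP i j) => [ij|ji|->]; last by rewrite ie ltn_eqF.
- rewrite (ltn_eqF (leqW ij)) orbF.
  case: (eqVneq j i.+1) => [jE|nij]; first by rewrite jE edge // -jE.
  by apply/negbTE/chordless; rewrite // ltn_neqAle eq_sym nij.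
- rewrite (ltn_eqF (leqW ji)) /=.
  case: (eqVneq i j.+1) => [iE|nji]; first by rewrite iE se edge // -iE.
  by rewrite se; apply/negbTE/chordless; rewrite // ltn_neqAle eq_sym nji.
Qed.

Lemma mem_last_path : w \in P.
Proof. by rewrite -node_last mem_nth // size_path_nodes. Qed.

Lemma notin_path_neq x : x \notin P -> (x != u) && (x != v).
Proof.
by move=> xP; apply/andP; split; apply: contraNneq xP => ->;
  rewrite ?mem_head // inE mem_rcons mem_head orbT.
Qed.

Lemma interior_nbr_mem a b : a \in P -> a != u -> a != v -> e a b -> b \in P.
Proof.
move=> aP au av ab.
have aq : a \in q by move: aP; rewrite inE (negbTE au) mem_rcons inE (negbTE av).
set i := index a P; have iP : i < size P by rewrite index_mem.
have aE : node i = a := node_index aP.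
have i0 : 0 < i by rewrite lt0n; apply: contra_neq au => i0; rewrite -aE i0.
have iS : i.+1 < size P.
  rewrite ltn_neqAle iP andbT; apply: contra_neq av => iE.
  by rewrite -aE -[RHS]node_v; move: iE; rewrite size_path_nodes => -[->].
have i1P : i.-1 < size P by rewrite (leq_ltn_trans (leq_pred i)).
have nbrs : [set node i.-1; node i.+1] = [set y | e a y].
  have ne : node i.-1 != node i.+1 by rewrite nth_uniq // neq_ltn ltnS leq_pred.
  apply/eqP; rewrite eqEcard cards2 ne -[#|_|]/(deg e a) (eqP (allP dg a aq)).
  rewrite andbT; apply/fintype.subsetP => y; rewrite !inE -aE.
  by case/orP=> /eqP->; rewrite adj_nodes // ?prednK ?eqxx ?orbT.
have : b \in [set y | e a y] by rewrite inE.
by rewrite -nbrs => /set2P[]->; apply: mem_nth.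
Qed.

Lemma nbr_v_path b : b \in P -> e v b = (b == w).
Proof.
move=> bP; have bi : index b P < (size q).+2 by rewrite -size_path_nodes index_mem.
rewrite -node_v -node_last -(node_index bP) adj_nodes ?size_path_nodes //.
by rewrite nth_uniq ?size_path_nodes // (ltn_eqF bi) eqSS eq_sym.
Qed.

Lemma out_nbr_v_nadj_u b : b \notin P -> e v b -> ~~ e u b.
Proof.
move=> bP vb; rewrite se.
have := @acyclic_chordless _ _ (rcons P b) u 0 (size P) ac.
rewrite rcons_uniq bP un nth_rcons ltnn eqxx size_rcons ltnSn size_path_nodes.
by apply => //; rewrite /sorted /= rcons_path pth last_rcons.
Qed.

Lemma exists_out_nbr_v : deg e v != 1 -> exists2 b, b \notin P & e v b.
Proof.
case: (pickP [pred b | (b \notin P) && e v b]) => [b /andP[]|none]; first by exists b.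
rewrite /deg (_ : [set y | e v y] = [set w]) ?cards1 //.
apply/setP => y; rewrite !inE; apply/idP/eqP => [vy|->]; last first.
  by rewrite nbr_v_path ?mem_last_path.
apply/eqP; rewrite -nbr_v_path //.
by move: (none y) => /= /negbT; rewrite negb_and negbK vy orbF.
Qed.

Lemma moved_nbrE b : e v b && (b != w) = (b \notin P) && e v b.
Proof.
case: (boolP (b \in P)) => bP; first by rewrite nbr_v_path // andbN.
by apply/andb_idr => _; apply: contraNneq bP => ->; apply: mem_last_path.
Qed.

Lemma gts_path_in a b : a \in P -> b \in P -> T1 a b = e a b.
Proof.
by move=> aP bP; rewrite /gts /= !moved_nbrE aP bP /= !andbF /= andbT !orbF.
Qed.

Lemma gts_path_out a b :
  a \in P -> b \notin P -> T1 a b = (a == u) && (e u b || e v b).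
Proof.
move=> aP bP; have /andP[bu bv] := notin_path_neq bP.
rewrite /gts /= !moved_nbrE aP bP (negbTE bu) (negbTE bv) /= !orbF.
case: (eqVneq a u) => [->|au]; first by rewrite (negbTE u_neq_v) andbT.
case: (eqVneq a v) => [->|av]; first by rewrite andbN.
rewrite /= ?andbT ?orbF; apply/negbTE; apply: contraNN bP; exact: interior_nbr_mem.
Qed.

Lemma gts_out a b : a \notin P -> b \notin P -> T1 a b = e a b.
Proof.
move=> /notin_path_neq/andP[au av] /notin_path_neq/andP[bu bv].
by rewrite /gts /= (negbTE au) (negbTE av) (negbTE bu) (negbTE bv) /= orbF andbT.
Qed.

Lemma gts_path_irr : irreflexive T1.
Proof. by apply: gts_irr => //; rewrite moved_nbrE mem_head. Qed.

Lemma natr_gts (R : comPzRingType) i j : ((T1 i j)%:R : R)%R =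
  ((e i j)%:R - ((i == v) && moved j)%:R - ((j == v) && moved i)%:R
   + ((i == u) && moved j)%:R + ((j == u) && moved i)%:R)%R.
Proof.
have moved_v : ~~ moved v by rewrite inE mem_rcons mem_head orbT.
have moved_u : ~~ moved u by rewrite mem_head.
rewrite /gts /= !moved_nbrE; apply: natr_edit.
- by case: (eqVneq i v) => [->|] //=; rewrite (negbTE moved_v) !andbF.
- by case: (eqVneq i u) => [->|] //=; rewrite (negbTE moved_u) !andbF.
- by case/orP=> /andP[/eqP-> /andP[_ vb]]; rewrite // se.
- case/orP=> /andP[/eqP-> /andP[bP vb]]; last rewrite se;
    exact: out_nbr_v_nadj_u.
Qed.

End ShiftAlongPath.

Section PathReversal.
Variables (n : nat) (e : rel 'I_n) (u v : 'I_n) (q : seq 'I_n).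
Hypotheses (se : symmetric e) (ie : irreflexive e) (ac : acyclic e).
Hypotheses (pth : path e u (rcons q v)) (un : uniq (u :: rcons q v)).
Hypothesis dg : all (fun x => deg e x == 2) q.

Local Notation P := (u :: rcons q v).
Local Notation node t := (nth u P t).

Lemma rev_path_nodes : v :: rcons (rev q) u = rev P.
Proof. by rewrite rev_cons rev_rcons. Qed.

Lemma mem_rev_path_nodes x : (x \in v :: rcons (rev q) u) = (x \in P).
Proof. by rewrite rev_path_nodes mem_rev. Qed.

Lemma path_rev_nodes : path e v (rcons (rev q) u).
Proof.
have := rev_path e u (rcons q v); rewrite last_rcons belast_rcons rev_cons => ->.
by rewrite (eq_path (e' := e)) // => a b; rewrite se.
Qed.

Lemma uniq_rev_nodes : uniq (v :: rcons (rev q) u).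
Proof. by rewrite rev_path_nodes rev_uniq. Qed.

Lemma all_deg2_rev : all (fun x => deg e x == 2) (rev q).
Proof. by rewrite all_rev. Qed.

Definition path_flip (a : 'I_n) : 'I_n :=
  if a \in P then nth u (rev P) (index a P) else a.

Lemma path_flip_node i : i < size P -> path_flip (node i) = node (size P - i.+1).
Proof. by move=> iP; rewrite /path_flip mem_nth // index_uniq // nth_rev. Qed.

Lemma path_flip_out a : a \notin P -> path_flip a = a.
Proof. by rewrite /path_flip => /negbTE->. Qed.

Lemma path_flip_mem a : (path_flip a \in P) = (a \in P).
Proof.
case: (boolP (a \in P)) => aP; last by rewrite path_flip_out // (negbTE aP).
have iP : index a P < size P by rewrite index_mem.
by rewrite -(node_index aP) path_flip_node // mem_nth // ltn_subrL.
Qed.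

Lemma path_flipK : involutive path_flip.
Proof.
move=> a; case: (boolP (a \in P)) => aP; last by rewrite !path_flip_out.
have iP : index a P < size P by rewrite index_mem.
rewrite -(node_index aP) !path_flip_node ?ltn_subrL //; congr nth.
by rewrite subnSK // subKn // ltnW.
Qed.

Lemma path_flip_u : path_flip u = v.
Proof.
rewrite -[u in LHS]/(node 0) path_flip_node ?size_path_nodes //.
by rewrite subn1 /= nth_rcons ltnn eqxx.
Qed.

Lemma path_flip_v : path_flip v = u.
Proof. by rewrite -path_flip_u path_flipK. Qed.

Lemma adj_path_flip a b : a \in P -> b \in P ->
  e (path_flip a) (path_flip b) = e a b.
Proof.
move=> aP bP; have iP : index a P < size P by rewrite index_mem.
have jP : index b P < size P by rewrite index_mem.
rewrite -(node_index aP) -(node_index bP) !path_flip_node //.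
rewrite !(adj_nodes se ie ac pth un) ?ltn_subrL //.
by move: (index a P) (index b P) (size P) iP jP => i j k; clear; lia.
Qed.

Lemma gts_path_flip a b :
  gts e u v (last u q) (path_flip a) (path_flip b) = gts e v u (last v (rev q)) a b.
Proof.
have pth' := path_rev_nodes; have un' := uniq_rev_nodes; have dg' := all_deg2_rev.
have flip_eq_u c : (path_flip c == u) = (c == v).
  by rewrite -path_flip_v (can_eq path_flipK).
wlog aP : a b / a \in P.
  move=> H; case: (boolP (a \in P)) => aP; first exact: H.
  case: (boolP (b \in P)) => bP; first by rewrite gts_sym // [RHS]gts_sym // H.
  rewrite !gts_out ?path_flip_out ?path_flip_mem ?mem_rev_path_nodes //.
case: (boolP (b \in P)) => bP.
  rewrite (gts_path_in se ie ac pth un) ?path_flip_mem // adj_path_flip //.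
  by rewrite (gts_path_in se ie ac pth' un') ?mem_rev_path_nodes.
rewrite (path_flip_out bP) (gts_path_out se ie ac pth un dg) ?path_flip_mem //.
rewrite (gts_path_out se ie ac pth' un' dg') ?mem_rev_path_nodes //.
by rewrite flip_eq_u orbC.
Qed.

End PathReversal.

Local Open Scope ring_scope.

Section Rayleigh.
Variables (R : realType) (n : nat).
Implicit Types (M K : 'M[R]_n) (x y a b : 'rV[R]_n).

Definition bilin M a b : R := (a *m M *m b^T) 0 0.
Definition sqnorm a : R := \sum_i a 0 i ^+ 2.

Lemma bilinE M a b : bilin M a b = \sum_i \sum_j a 0 i * M i j * b 0 j.
Proof.
rewrite /bilin mxE; under eq_bigr do rewrite !mxE big_distrl /=.
by rewrite exchange_big; apply: eq_bigr => i _; apply: eq_bigr => j _; rewrite ?mxE.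
Qed.

Lemma bilinDl M a b c : bilin M (a + b) c = bilin M a c + bilin M b c.
Proof. by rewrite /bilin !mulmxDl mxE. Qed.

Lemma bilinDr M a b c : bilin M c (a + b) = bilin M c a + bilin M c b.
Proof. by rewrite /bilin linearD /= mulmxDr mxE. Qed.

Lemma bilinZl M t a c : bilin M (t *: a) c = t * bilin M a c.
Proof. by rewrite /bilin -!scalemxAl mxE. Qed.

Lemma bilinZr M t a c : bilin M c (t *: a) = t * bilin M c a.
Proof. by rewrite /bilin linearZ /= -scalemxAr mxE. Qed.

Lemma bilinC M a b : M^T = M -> bilin M a b = bilin M b a.
Proof.
move=> sM; rewrite /bilin -[in LHS](trmxK (a *m M *m b^T)) [LHS]mxE.
by rewrite !trmx_mul trmxK sM mulmxA.
Qed.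

Lemma sqnorm_mulmx a : (a *m a^T) 0 0 = sqnorm a.
Proof. by rewrite mxE; apply: eq_bigr => i _; rewrite !mxE expr2. Qed.

Lemma bilin_subscalar M c a :
  bilin (M - c *: 1%:M) a a = bilin M a a - c * sqnorm a.
Proof.
have entry (A B : 'M[R]_1) : (A - c *: B) 0 0 = A 0 0 - c * B 0 0 by rewrite !mxE.
by rewrite /bilin mulmxBr mulmxBl -scalemxAr mulmx1 -scalemxAl entry sqnorm_mulmx.
Qed.

Lemma sqnorm_ge0 a : 0 <= sqnorm a.
Proof. by apply: sumr_ge0 => i _; apply: sqr_ge0. Qed.

Lemma sqnorm_eq0 a : (sqnorm a == 0) = (a == 0).
Proof.
apply/idP/eqP => [|->]; last by rewrite /sqnorm big1 // => i _; rewrite mxE expr0n.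
rewrite psumr_eq0 => [/allP a0|i _]; last exact: sqr_ge0.
apply/matrixP => i j; rewrite ord1 mxE.
by apply/eqP; rewrite -sqrf_eq0; apply: a0; apply: mem_index_enum.
Qed.

Lemma sqnorm_gt0 a : a != 0 -> 0 < sqnorm a.
Proof. by rewrite lt_def sqnorm_eq0 sqnorm_ge0 andbT. Qed.

Lemma sqnormZ t a : sqnorm (t *: a) = t ^+ 2 * sqnorm a.
Proof. by rewrite -!sqnorm_mulmx linearZ /= -scalemxAr -scalemxAl !mxE mulrA -expr2. Qed.

Lemma bilin_eigen M mu x : x *m M = mu *: x -> bilin M x x = mu * sqnorm x.
Proof. by rewrite /bilin => ->; rewrite -scalemxAl mxE sqnorm_mulmx. Qed.

Lemma nsd_form_kernel K x : K^T = K -> (forall y, bilin K y y <= 0) ->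
  bilin K x x = 0 -> x *m K = 0.
Proof.
move=> sK nsd Kx0; set r := x *m K.
have xr : bilin K x r = sqnorm r by rewrite /bilin sqnorm_mulmx.
have perturb t : 2 * t * sqnorm r + t ^+ 2 * bilin K r r <= 0.
  have := nsd (x + t *: r).
  rewrite bilinDl !bilinDr !bilinZl !bilinZr Kx0 (bilinC r x sK) xr.
  by congr (_ <= 0); ring.
apply/eqP; rewrite -sqnorm_eq0 eq_le sqnorm_ge0 andbT leNgt; apply/negP => N0.
have G0 := nsd r; set G := bilin K r r in G0 perturb.
(* As [G <= 0], taking [t = |r|^2 / (1 - G)] makes the left side of [perturb]
   positive unless [r = 0]. *)
have := perturb (sqnorm r / (1 - G)); set t := sqnorm r / (1 - G).
have t0 : 0 < t by rewrite divr_gt0 // subr_gt0 (le_lt_trans G0).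
have tG : t * (1 - G) = sqnorm r by rewrite divfK // gt_eqF // subr_gt0 (le_lt_trans G0).
nra.
Qed.

Lemma rayleigh_max_eigenvector M mu x : M^T = M ->
  (forall y, bilin M y y <= mu * sqnorm y) -> bilin M x x = mu * sqnorm x ->
  x *m M = mu *: x.
Proof.
move=> sM le_mu eq_mu; apply/eqP; rewrite -subr_eq0.
have -> : x *m M - mu *: x = x *m (M - mu *: 1%:M).
  by rewrite mulmxBr -scalemxAr mulmx1.
apply/eqP/nsd_form_kernel => [|y|]; rewrite ?bilin_subscalar ?subr_le0 //.
  by rewrite linearB /= linearZ /= trmx1 sM.
by rewrite eq_mu subrr.
Qed.

Lemma rayleigh_largest_eigenvalue M mu x :
  (forall y, bilin M y y <= mu * sqnorm y) -> x != 0 -> x *m M = mu *: x ->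
  largest_eigenvalue M mu.
Proof.
move=> le_mu x0 xM; split; first by apply/eigenvalueP; exists x.
move=> nu /eigenvalueP[y yM y0]; have := le_mu y.
by rewrite (bilin_eigen yM) ler_pM2r // sqnorm_gt0.
Qed.

Lemma rayleigh_lt M0 M1 mu0 mu1 x : M1^T = M1 ->
  (forall y, bilin M1 y y <= mu1 * sqnorm y) -> sqnorm x = 1 ->
  x *m M0 = mu0 *: x -> mu0 <= bilin M1 x x -> x *m M1 != x *m M0 -> mu0 < mu1.
Proof.
move=> sM1 le_mu1 x1 xM0 mu0_le; apply: contraNlt => mu10.
have := le_mu1 x; rewrite x1 mulr1 => le1.
have mu01 : mu0 = mu1 by apply/eqP; rewrite eq_le (le_trans mu0_le le1) mu10.
rewrite xM0 mu01 (rayleigh_max_eigenvector sM1 le_mu1) // x1 mulr1.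
by apply/eqP; rewrite eq_le le1 -mu01.
Qed.

Lemma eigenvector_gt0 M mu x : (forall i j, 0 <= M i j) ->
  (forall i j, i != j -> 0 < M i j) -> (forall i, 0 <= x 0 i) -> x != 0 ->
  x *m M = mu *: x -> forall i, 0 < x 0 i.
Proof.
move=> M0 M1 x0 xn0 xM i; rewrite lt_def x0 andbT; apply: contraNneq xn0 => xi.
have : (x *m M) 0 i == 0 by rewrite xM mxE xi mulr0.
rewrite mxE psumr_eq0 => [/allP zero|j _]; last by rewrite mulr_ge0.
apply/eqP/matrixP => a j; rewrite ord1 !mxE; case: (eqVneq j i) => [->//|ji].
move: (zero j (mem_index_enum _)); rewrite mulf_eq0 => /orP[/eqP //|].
by rewrite gt_eqF // M1.
Qed.

Lemma continuous_sum (T : topologicalType) (I : finType) (F : I -> T -> R) :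
  (forall i, continuous (F i)) -> continuous (fun t => \sum_i F i t).
Proof. by move=> cF; apply: continuous_big => [|i _]; [apply: add_continuous|]. Qed.

Lemma bilin_continuous M : continuous (fun y => bilin M y y).
Proof.
have -> : (fun y => bilin M y y) = fun y => \sum_i \sum_j y 0 i * M i j * y 0 j.
  by apply/funext => y; rewrite bilinE.
apply: continuous_sum => i; apply: continuous_sum => j y.
apply: (continuousM (s := fun y => y 0 i * M i j) (t := fun y => y 0 j)).
  apply: (continuousM (t := fun=> M i j)); first exact: coord_continuous.
  exact: cst_continuous.
exact: coord_continuous.
Qed.

Lemma sqnormE a : sqnorm a = bilin 1%:M a a.
Proof. by rewrite /bilin mulmx1 sqnorm_mulmx. Qed.

Lemma rayleigh_max_exists M : (0 < n)%N ->
  exists2 x, sqnorm x = 1 & forall y, bilin M y y <= bilin M x x * sqnorm y.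
Proof.
move=> n0; set S := [set y : 'rV[R]_n | sqnorm y = 1]%classic.
have S0 : (S !=set0)%classic.
  exists (\row_j (j == Ordinal n0)%:R); rewrite /S /= /sqnorm (bigD1 (Ordinal n0)) //=.
  by rewrite big1 ?addr0 => [|j /negbTE jn]; rewrite mxE ?eqxx ?jn ?expr1n ?expr0n.
have Scompact : compact S.
  have Sclosed : closed S.
    apply: (@preimage_closed _ _ sqnorm [set 1]%classic); last exact: closed_eq.
    have -> : sqnorm = (fun y => bilin 1%:M y y) by apply/funext => y; rewrite sqnormE.
    by move=> y _; apply: bilin_continuous.
  apply: (subclosed_compact Sclosed (rV_compact (fun=> @segment_compact _ (-1) 1))).
  move=> y /= Sy i; rewrite /= in_itv /=.
  have : y 0 i ^+ 2 <= 1.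
    by rewrite -Sy /sqnorm (bigD1 i) //= lerDl sumr_ge0 // => j _; apply: sqr_ge0.
  by move=> y1; apply/andP; split; nra.
have [c Sc cmax] :=
  EVT_max_rV S0 Scompact (continuous_subspaceT (@bilin_continuous M)).
have c1 : sqnorm c = 1 by move: Sc; rewrite inE.
exists c => // y; have [->|y0] := eqVneq y 0.
  by rewrite /bilin mul0mx mul0mx mxE /sqnorm big1 ?mulr0 // => i _; rewrite mxE expr0n.
have ny := sqnorm_gt0 y0; set s := Num.sqrt (sqnorm y).
have s0 : 0 < s by rewrite sqrtr_gt0.
have s2 : s ^+ 2 = sqnorm y by rewrite sqr_sqrtr // ltW.
have := cmax (s^-1 *: y); rewrite inE /S /= sqnormZ exprVn s2 mulVf ?gt_eqF //.
move=> /(_ erefl); rewrite bilinZl bilinZr mulrA -expr2 exprVn s2.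
by rewrite -(ler_pM2r ny) mulrAC mulVf ?mul1r ?gt_eqF.
Qed.

Lemma perron_vector M : (0 < n)%N -> M^T = M -> (forall i j, 0 <= M i j) ->
  exists mu x, [/\ largest_eigenvalue M mu, sqnorm x = 1,
    (forall i, 0 <= x 0 i), x *m M = mu *: x &
    forall y, bilin M y y <= mu * sqnorm y].
Proof.
move=> n0 sM M0; have [x0 x01 x0max] := rayleigh_max_exists M n0.
set x := map_mx Num.norm x0.
have x1 : sqnorm x = 1.
  by rewrite -x01; apply: eq_bigr => i _; rewrite mxE real_normK ?num_real.
have x0x : bilin M x0 x0 <= bilin M x x.
  rewrite !bilinE; apply: ler_sum => i _; apply: ler_sum => j _; rewrite !mxE.
  by apply: le_trans (ler_norm _) _; rewrite !normrM (ger0_norm (M0 i j)).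
have xmax y : bilin M y y <= bilin M x x * sqnorm y.
  by apply: le_trans (x0max y) _; rewrite ler_wpM2r ?sqnorm_ge0.
have xM : x *m M = bilin M x x *: x.
  by apply: rayleigh_max_eigenvector => //; rewrite x1 mulr1.
have x_neq0 : x != 0 by rewrite -sqnorm_eq0 x1 oner_neq0.
exists (bilin M x x), x; split => // [|i]; last by rewrite mxE normr_ge0.
exact: rayleigh_largest_eigenvalue xmax x_neq0 xM.
Qed.

End Rayleigh.

Section QuadraticForm.
Variables (R : numDomainType) (n : nat).
Implicit Types (d : 'I_n -> 'I_n -> nat) (x : 'I_n -> R).

Definition qform d x : R := \sum_i \sum_j (d i j)%:R * (x i ^+ 2 + x i * x j).
Definition qcol d x (u : 'I_n) : R := \sum_k (d u k)%:R * (x u + x k).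

Lemma qform_le d1 d2 x : (forall i j, d1 i j <= d2 i j)%N ->
  (forall i, 0 <= x i) -> qform d1 x <= qform d2 x.
Proof.
move=> d12 x0; apply: ler_sum => i _; apply: ler_sum => j _.
by rewrite ler_wpM2r ?ler_nat // addr_ge0 ?sqr_ge0 ?mulr_ge0.
Qed.

Lemma qcol_le d1 d2 x u : (forall i j, d1 i j <= d2 i j)%N ->
  (forall i, 0 <= x i) -> qcol d1 x u <= qcol d2 x u.
Proof.
by move=> d12 x0; apply: ler_sum => k _; rewrite ler_wpM2r ?ler_nat ?addr_ge0.
Qed.

Lemma qform_reindex d (s : 'I_n -> 'I_n) x : injective s ->
  qform (fun i j => d (s i) (s j)) (x \o s) = qform d x.
Proof.
move=> s_inj; rewrite [RHS](reindex_inj s_inj); apply: eq_bigr => i _.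
by rewrite [RHS](reindex_inj s_inj).
Qed.

Lemma sum_shift (S : pred 'I_n) (a b : 'I_n) (F : 'I_n -> 'I_n -> R) :
  \sum_i \sum_j (((i == a) && S j)%:R + ((j == a) && S i)%:R
                 - ((i == b) && S j)%:R - ((j == b) && S i)%:R) * F i j =
  \sum_k (S k)%:R * (F a k + F k a - F b k - F k b).
Proof.
have row (c : 'I_n) (G : 'I_n -> 'I_n -> R) :
    \sum_i \sum_j ((i == c) && S j)%:R * G i j = \sum_k (S k)%:R * G c k.
  rewrite (bigD1 c) //= [X in _ + X]big1 ?addr0 => [|i ic].
    by apply: eq_bigr => k _; rewrite eqxx.
  by apply: big1 => j _; rewrite (negbTE ic) mul0r.
have col (c : 'I_n) :
    \sum_i \sum_j ((j == c) && S i)%:R * F i j = \sum_k (S k)%:R * F k c.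
  by rewrite exchange_big; apply: (row c (fun j i => F i j)).
transitivity (\sum_i \sum_j ((i == a) && S j)%:R * F i j
  + \sum_i \sum_j ((j == a) && S i)%:R * F i j
  - \sum_i \sum_j ((i == b) && S j)%:R * F i j
  - \sum_i \sum_j ((j == b) && S i)%:R * F i j).
  rewrite -big_split -!sumrB; apply: eq_bigr => i _.
  by rewrite -big_split -!sumrB; apply: eq_bigr => j _ /=; ring.
rewrite !row !col -big_split -!sumrB; apply: eq_bigr => k _ /=; ring.
Qed.

Lemma sum_indicator_gt0 (S : pred 'I_n) (F : 'I_n -> R) k :
  S k -> 0 < F k -> (forall i, S i -> 0 <= F i) -> 0 < \sum_i (S i)%:R * F i.
Proof.
move=> Sk Fk F0; rewrite (bigD1 k) //= Sk mul1r ltr_pwDl // sumr_ge0 // => i _.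
by case: (boolP (S i)) => Si; rewrite ?mul1r ?F0 ?mul0r.
Qed.

End QuadraticForm.

Section DistanceSignlessLaplacian.
Variables (R : realType) (n : nat) (g : rel 'I_n).
Hypothesis sg : symmetric g.

Lemma bilin_distQ (y : 'rV[R]_n) : bilin (distQ R g) y y = qform (dist g) (y 0).
Proof.
rewrite bilinE /qform; apply: eq_bigr => i _.
under eq_bigr do rewrite mxE mulrDr mulrDl.
rewrite big_split /= (bigD1 i) //= eqxx [X in _ + X + _]big1 => [|j ji]; last first.
  by rewrite eq_sym (negbTE ji) mulr0 mul0r.
rewrite addr0 /transmission natr_sum mulr_sumr mulr_suml -big_split /=.
by apply: eq_bigr => j _; ring.
Qed.

Lemma distQ_col (y : 'rV[R]_n) u : (y *m distQ R g) 0 u = qcol (dist g) (y 0) u.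
Proof.
rewrite mxE /qcol; under eq_bigr do rewrite mxE mulrDr.
rewrite big_split /= (bigD1 u) //= eqxx [X in _ + X + _]big1 => [|i iu]; last first.
  by rewrite (negbTE iu) mulr0.
rewrite addr0 /transmission natr_sum mulr_sumr -big_split /=.
by apply: eq_bigr => k _; rewrite (dist_sym _ _ sg); ring.
Qed.

Lemma distQ_sym : (distQ R g)^T = distQ R g.
Proof.
apply/matrixP => i j; rewrite !mxE eq_sym (dist_sym _ _ sg).
by case: eqVneq => [->|].
Qed.

Lemma distQ_ge0 i j : 0 <= distQ R g i j.
Proof. by rewrite mxE addr_ge0 //; case: eqP. Qed.

End DistanceSignlessLaplacian.

Section ShiftForms.
Variables (R : realType) (n : nat) (e : rel 'I_n) (u v : 'I_n) (q : seq 'I_n).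
Hypotheses (se : symmetric e) (ie : irreflexive e) (ac : acyclic e).
Hypotheses (pth : path e u (rcons q v)) (un : uniq (u :: rcons q v)).

Local Notation P := (u :: rcons q v).
Local Notation T1 := (gts e u v (last u q)).
Local Notation moved k := ((k \notin P) && e v k).

Lemma qform_gts (x : 'I_n -> R) : qform (cdist T1) x - qform (cdist e) x =
  \sum_k (moved k)%:R * ((x u - x v) * (x u + x v + 2 * x k)).
Proof.
have diff i j : ((cdist T1 i j)%:R - (cdist e i j)%:R : R) =
    ((i == u) && moved j)%:R + ((j == u) && moved i)%:R
    - ((i == v) && moved j)%:R - ((j == v) && moved i)%:R.
  by rewrite /cdist !natrD (natr_gts se ie ac pth un); ring.
rewrite /qform -sumrB; under eq_bigr do rewrite -sumrB.
under eq_bigr do under eq_bigr do rewrite -mulrBl diff.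
rewrite (sum_shift (fun k => moved k)); apply: eq_bigr => k _; ring.
Qed.

Lemma qcol_gts (x : 'I_n -> R) :
  qcol (cdist T1) x u - qcol (cdist e) x u = \sum_k (moved k)%:R * (x u + x k).
Proof.
rewrite /qcol -sumrB; apply: eq_bigr => k _.
rewrite -mulrBl /cdist !natrD (natr_gts se ie ac pth un) eqxx (negbTE (u_neq_v un)).
by rewrite mem_head /= !andbF; ring.
Qed.

End ShiftForms.

Section ComplementShift.
Variables (R : realType) (n : nat) (e : rel 'I_n) (u v : 'I_n) (q : seq 'I_n).
Hypotheses (se : symmetric e) (ie : irreflexive e) (ac : acyclic e).
Hypotheses (pth : path e u (rcons q v)) (un : uniq (u :: rcons q v)).
Hypothesis dg : all (fun x => deg e x == 2)%N q.
Hypothesis dm : diam_ge e 4.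

Local Notation T1 := (gts e u v (last u q)).
Local Notation M0 := (distQ R (complement e)).
Local Notation M1 := (distQ R (complement T1)).

Lemma bilin_complement_tree (y : 'rV[R]_n) : bilin M0 y y = qform (cdist e) (y 0).
Proof.
rewrite bilin_distQ; apply: eq_bigr => i _; apply: eq_bigr => j _.
by rewrite dist_complement_diam4.
Qed.

Lemma col_complement_tree (y : 'rV[R]_n) w :
  (y *m M0) 0 w = qcol (cdist e) (y 0) w.
Proof.
rewrite (distQ_col (complement_sym se)); apply: eq_bigr => k _.
by rewrite dist_complement_diam4.
Qed.

Lemma qform_shift_le_bilin (y : 'rV[R]_n) :
  (forall i, 0 <= y 0 i) -> qform (cdist T1) (y 0) <= bilin M1 y y.
Proof.
move=> y0; rewrite bilin_distQ.
apply: qform_le => // i j.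
exact/cdist_le_dist_complement/(gts_path_irr se ie ac pth un).
Qed.

Lemma qcol_shift_le_col (y : 'rV[R]_n) w :
  (forall i, 0 <= y 0 i) -> qcol (cdist T1) (y 0) w <= (y *m M1) 0 w.
Proof.
move=> y0; rewrite (distQ_col (complement_sym (gts_sym _ _ _ se))).
apply: qcol_le => // i j.
exact/cdist_le_dist_complement/(gts_path_irr se ie ac pth un).
Qed.

Variables (mu mu1 : R) (x : 'rV[R]_n).
Hypotheses (x1 : sqnorm x = 1) (x_ge0 : forall i, 0 <= x 0 i).
Hypothesis xM0 : x *m M0 = mu *: x.
Hypothesis mu1_max : forall y, bilin M1 y y <= mu1 * sqnorm y.

Lemma perron_value_qform : mu = qform (cdist e) (x 0).
Proof. by rewrite -bilin_complement_tree (bilin_eigen xM0) x1 mulr1. Qed.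

Lemma spectral_radius_lt_heavy_u : deg e v != 1%N -> x 0 v <= x 0 u -> mu < mu1.
Proof.
move=> dv xvu.
have x_gt0 : forall i, 0 < x 0 i.
  apply: eigenvector_gt0 xM0 => // [i j|i j ij|].
  - exact: distQ_ge0.
  - rewrite mxE (negbTE ij) add0r ltr0n.
    by apply: leq_trans (cdist_le_dist_complement _ _ ie); rewrite /cdist ij.
  - by rewrite -sqnorm_eq0 x1 oner_neq0.
have sM1 : M1^T = M1 := distQ_sym R (complement_sym (gts_sym _ _ _ se)).
apply: (rayleigh_lt sM1 mu1_max x1 xM0).
  rewrite perron_value_qform; apply: le_trans (qform_shift_le_bilin x_ge0).
  rewrite -subr_ge0 (qform_gts se ie ac pth un); apply: sumr_ge0 => k _.
  by rewrite !mulr_ge0 ?subr_ge0 ?addr_ge0 ?mulr_ge0.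
(* The Perron vector of [T] is not an eigenvector of [T1]: compare entry [u]. *)
have [b bP vb] := exists_out_nbr_v se ie ac pth un dv.
have : (x *m M0) 0 u < (x *m M1) 0 u.
  apply: lt_le_trans (qcol_shift_le_col u x_ge0).
  rewrite col_complement_tree -subr_gt0 (qcol_gts se ie ac pth un).
  apply: (sum_indicator_gt0 (k := b)); first by rewrite bP vb.
    by rewrite addr_gt0.
  by move=> i _; rewrite addr_ge0.
by apply: contraTneq => ->; rewrite ltxx.
Qed.

Lemma spectral_radius_lt_heavy_v : deg e u != 1%N -> x 0 u < x 0 v -> mu < mu1.
Proof.
move=> du xuv.
have pth' := path_rev_nodes se pth; have un' := uniq_rev_nodes un.
set s := path_flip u v q; have sK : involutive s := path_flipK un.
have s_inj : injective s := can_inj sK.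
set z : 'rV[R]_n := \row_i x 0 (s i).
have zE : z 0 = x 0 \o s by apply/funext => i; rewrite mxE.
have z1 : sqnorm z = 1.
  by rewrite -x1 /sqnorm [RHS](reindex_inj s_inj); apply: eq_bigr => i _; rewrite mxE.
have z_ge0 i : 0 <= z 0 i by rewrite mxE.
rewrite -[mu1]mulr1 -z1; apply: lt_le_trans (mu1_max z).
apply: lt_le_trans (qform_shift_le_bilin z_ge0).
(* Reversing the path identifies [T1] with the shift from [u] to [v]. *)
have -> : qform (cdist T1) (z 0) = qform (cdist (gts e v u (last v (rev q)))) (x 0).
  rewrite zE -(qform_reindex (cdist (gts e v u (last v (rev q)))) _ s_inj).
  apply: eq_bigr => i _; apply: eq_bigr => j _.
  rewrite /cdist (inj_eq s_inj) -(gts_path_flip se ie ac pth un dg).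
  by rewrite /s !(path_flipK un).
rewrite perron_value_qform -subr_gt0 (qform_gts se ie ac pth' un').
have [b bP ub] := exists_out_nbr_v se ie ac pth' un' du.
apply: (sum_indicator_gt0 (k := b)); first by rewrite bP ub.
  apply: mulr_gt0; first by rewrite subr_gt0.
  by have := x_ge0 u; have := x_ge0 b; lra.
move=> k _; apply: mulr_ge0; first by rewrite subr_ge0 ltW.
by have := x_ge0 u; have := x_ge0 v; have := x_ge0 k; lra.
Qed.

End ComplementShift.

Theorem mainTheorem2 (R : realType) (n : nat) (e : rel 'I_n)
    (u v : 'I_n) (q : seq 'I_n) :
  is_tree e -> diam_ge e 4 ->
  path e u (rcons q v) -> uniq (u :: rcons q v) ->
  all (fun x => deg e x == 2)%N q ->
  (deg e u != 1)%N -> (deg e v != 1)%N ->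
  exists mu mu1 : R,
    [/\ largest_eigenvalue (distQ R (complement e)) mu,
        largest_eigenvalue (distQ R (complement (gts e u v (last u q)))) mu1
      & mu1 > mu].
Proof.
move=> [[se ie] _ ac] dm pth un dg du dv.
have n0 : (0 < n)%N by apply: leq_ltn_trans (ltn_ord u).
have [mu [x [L0 x1 x_ge0 xM0 _]]] :=
  perron_vector n0 (distQ_sym R (complement_sym se)) (@distQ_ge0 R n _).
have [mu1 [_ [L1 _ _ _ mu1_max]]] :=
  perron_vector n0 (distQ_sym R (complement_sym (gts_sym u v (last u q) se)))
    (@distQ_ge0 R n _).
exists mu, mu1; split=> //.
case: (leP (x 0 v) (x 0 u)) => [xvu|xuv].
  exact: (spectral_radius_lt_heavy_u se ie ac pth un dm x1 x_ge0 xM0 mu1_max dv xvu).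
exact: (spectral_radius_lt_heavy_v se ie ac pth un dg dm x1 x_ge0 xM0 mu1_max du xuv).
Qed.
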